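(* Let $\{\mathcal X^\varepsilon\}$ be a $C^m$-Markov perturbation ($m\ge1$) of a synchronized DRN $\mathcal X^0$ with pull-back synchronization time $N^-$. Then for $\mu$-a.e. $\omega\in\Omega$: (i) if $d(\theta^{-1}\omega)\ne0$ then $q^{(1)}(\omega)\ne0$; (ii) if $d(\theta^{-1}\omega)=0$ and $\omega\in\bigcap_{\ell=1}^{N^-(\omega)-1}\theta^{\ell+1}\Omega_\bullet$, then $q^{(1)}(\omega)=0$.
   Context: Let $k\ge2$, $S=\{s_1,\dots,s_k\}$, $\mathbb K=\{1,\dots,k\}$, $e_1,\dots,e_k$ the canonical basis of $\mathbb R^k$; $|\cdot|$ is the $\ell^1$-norm and induced matrix norm. $\Theta=(\Omega,\mathcal F,\mu,\theta)$ is an invertible metric dynamical system (standard probability space, $\theta$ invertible, ergodic, $\mu$-preserving). A Markov random network (MRN) over $\Theta$ is a process $(X_n)$ on $S\times\Omega$ with fibrewise measurable, stochastic, Markov transition probabilities; its transition cocycle $P_{\mathcal X}(n,\omega)=(\mathbb P\{X_n=(s_i,\theta^n\omega)\mid X_0=(s_j,\omega)\})_{i,j}$ is column-stochastic, $P_{\mathcal X}(0,\omega)=I_k$, $P_{\mathcal X}(m+n,\omega)=P_{\mathcal X}(m,\theta^n\omega)P_{\mathcal X}(n,\omega)$ for $\mu$-a.e. $\omega$. A DRN is an MRN $\mathcal X^0$ with cocycle $P^0$ having entries in $\{0,1\}$; it is synchronized if there is a measurable $N:\Omega\to\mathbb N$ such that, $\mu$-a.e., all columns of $P^0(n,\omega)$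 coincide for $n\ge N(\omega)$. For a synchronized DRN there are $\mathcal F$-measurable $J:\Omega\to\mathbb K$ (synchronization index) and $N^-:\Omega\to\mathbb N$ (a pull-back synchronization time) with $P^0(n,\omega)e_{J(\omega)}=e_{J(\theta^n\omega)}$ for all $n$, and $P^0(n,\theta^{-n}\omega)e_j=e_{J(\omega)}$ for all $j$ and $n\ge N^-(\omega)$, $\mu$-a.e. $\omega$. A Markov perturbation of $\mathcal X^0$ is a family $\{\mathcal X^\varepsilon:\varepsilon\ge0\}$ of MRNs over $\Theta$ with $\mathcal X^\varepsilon=\mathcal X^0$ at $\varepsilon=0$ and $|P_{\mathcal X^\varepsilon}(1,\omega)-P^0(1,\omega)|\le\varepsilon$; it is $C^m$ if for some $\varepsilon_0>0$ and $\mu$-a.e. $\omega$, $\varepsilon\mapsto P_{\mathcal X^\varepsilon}(1,\omega)$ is $C^m$ on $[0,\varepsilon_0]$. Let $P^{(1)}(n,\omega)=\frac{d}{d\varepsilon}P_{\mathcal X^\varepsilon}(n,\omega)\big|_{\varepsilon=0}$ and $q^{(1)}(\omega)=P^{(1)}(N^-(\omega),\theta^{-N^-(\omega)}\omega)\,e_{J(\theta^{-N^-(\omega)}\omega)}$. The first-order probability dissipation is $d(\omega)=P^{(1)}(1,\omega)e_{J(\omega)}\in\mathbb R^k$. Let $S_\bullet(\omega)=\{s_j\in S:P^0(1,\omega)e_j=e_{J(\theta\omega)}\}$ and $\Omega_\bullet=\{\omega\in\Omega:d(\omega)_j=0\text{ for all }j\text{ with }s_j\notin S_\bullet(\theta\omega)\}$.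 *)

From HB Require Import structures.
From mathcomp Require Import all_boot all_order all_algebra.
From mathcomp Require Import all_classical all_reals all_analysis.
Set Implicit Arguments. Unset Strict Implicit. Unset Printing Implicit Defensive.
Import Order.TTheory GRing.Theory Num.Theory.
Import numFieldNormedType.Exports.
Local Open Scope classical_set_scope.
Local Open Scope ring_scope.

Section Defs.
Variable R : realType.

Definition invertible_mds d (Omega : measurableType d)
    (theta thinv : Omega -> Omega) :=
  [/\ cancel theta thinv, cancel thinv theta,
      measurable_fun setT theta & measurable_fun setT thinv].

Definition measure_preserving d (Omega : measurableType d)
    (mu : probability Omega R) (theta : Omega -> Omega) :=
  forall A : set Omega, measurable A -> mu (theta @^-1` A) = mu A.

Definition ergodic d (Omega : measurableType d)
    (mu : probability Omega R) (theta : Omega -> Omega) :=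
  forall A : set Omega, measurable A -> theta @^-1` A = A ->
    mu A = 0%E \/ mu A = 1%E.

Definition evec k (j : 'I_k) : 'cV[R]_k := delta_mx j ord0.

(* induced l^1 matrix norm = maximal absolute column sum *)
Definition mnorm1 k (A : 'M[R]_k) : R :=
  \big[Num.max/0]_(j < k) \sum_(i < k) `|A i j|.

Definition col_stochastic k (A : 'M[R]_k) :=
  (forall i j, 0 <= A i j) /\ (forall j, \sum_(i < k) A i j = 1).

Fixpoint cocycle d (Omega : measurableType d) k (theta : Omega -> Omega)
    (P1 : Omega -> 'M[R]_k) (n : nat) (w : Omega) : 'M[R]_k :=
  match n with
  | 0 => 1%:M
  | n'.+1 => P1 (iter n' theta w) *m cocycle theta P1 n' w
  end.

Definition MRN d (Omega : measurableType d) k (P1 : Omega -> 'M[R]_k) :=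
  (forall i j, measurable_fun setT (fun w => P1 w i j)) /\
  (forall w, col_stochastic (P1 w)).

Definition DRN d (Omega : measurableType d) k (P1 : Omega -> 'M[R]_k) :=
  MRN P1 /\ (forall w i j, P1 w i j = 0 \/ P1 w i j = 1).

Definition synchronized d (Omega : measurableType d)
    (mu : probability Omega R) k (theta : Omega -> Omega)
    (P1 : Omega -> 'M[R]_k) :=
  exists N : Omega -> nat, (forall n, measurable [set w | N w = n]) /\
    {ae mu, forall w, forall n, (N w <= n)%N ->
       forall j j' : 'I_k, col j (cocycle theta P1 n w) =
                           col j' (cocycle theta P1 n w)}.

Definition has_deriv_within (a b : R) (f : R -> R) (x l : R) :=
  (fun y => (f y - f x) / (y - x)) @
     within [set y | a <= y <= b /\ y != x] (nbhs x) --> l.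

Definition Cm_on (m : nat) (a b : R) (f : R -> R) :=
  exists F : nat -> R -> R,
    (forall x, a <= x <= b -> F 0%N x = f x) /\
    (forall j, (j <= m)%N -> {within [set x | a <= x <= b], continuous (F j)}) /\
    (forall j, (j < m)%N -> forall x, a <= x <= b ->
        has_deriv_within a b (F j) x (F j.+1 x)).

(* {X^eps : eps >= 0} with one-step matrices Peps eps; Peps 0 is the DRN *)
Definition Markov_perturbation d (Omega : measurableType d) k
    (Peps : R -> Omega -> 'M[R]_k) :=
  (forall e, 0 <= e -> MRN (Peps e)) /\
  (forall e, 0 <= e -> forall w, mnorm1 (Peps e w - Peps 0 w) <= e).

Definition Cm_perturbation d (Omega : measurableType d)
    (mu : probability Omega R) k (m : nat) (Peps : R -> Omega -> 'M[R]_k) :=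
  Markov_perturbation Peps /\
  exists eps0 : R, 0 < eps0 /\
    {ae mu, forall w, forall i j : 'I_k, Cm_on m 0 eps0 (fun e => Peps e w i j)}.

Definition P1deriv d (Omega : measurableType d) k (theta : Omega -> Omega)
    (Peps : R -> Omega -> 'M[R]_k) (n : nat) (w : Omega) : 'M[R]_k :=
  \matrix_(i, j) lim ((fun e : R => (cocycle theta (Peps e) n w i j
                                     - cocycle theta (Peps 0) n w i j) / e)
                       @ 0^'+).

Definition dissip d (Omega : measurableType d) k (theta : Omega -> Omega)
    (Peps : R -> Omega -> 'M[R]_k) (J : Omega -> 'I_k) (w : Omega) : 'cV[R]_k :=
  P1deriv theta Peps 1 w *m evec (J w).

Definition q1 d (Omega : measurableType d) k (theta thinv : Omega -> Omega)
    (Peps : R -> Omega -> 'M[R]_k) (J : Omega -> 'I_k) (Nm : Omega -> nat)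
    (w : Omega) : 'cV[R]_k :=
  P1deriv theta Peps (Nm w) (iter (Nm w) thinv w)
    *m evec (J (iter (Nm w) thinv w)).

Definition Sbullet d (Omega : measurableType d) k (theta : Omega -> Omega)
    (P0 : Omega -> 'M[R]_k) (J : Omega -> 'I_k) (w : Omega) : set 'I_k :=
  [set j | P0 w *m evec j = evec (J (theta w))].

Definition Omega_bullet d (Omega : measurableType d) k (theta : Omega -> Omega)
    (Peps : R -> Omega -> 'M[R]_k) (J : Omega -> 'I_k) : set Omega :=
  [set w | forall j : 'I_k, ~ Sbullet theta (Peps 0) J (theta w) j ->
             dissip theta Peps J w j ord0 = 0].

End Defs.
Arguments evec {R k}.
Arguments mnorm1 {R k}.
Arguments col_stochastic {R k}.

(* Lemma 4.4.  Fix a typical w, let N = N^-(w), u_n = theta^n (theta^-N w)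
   and q_n = P^(1)(n, u_0) e_{J u_0}, so that q^(1)(w) = q_N.  Differentiating
   P_eps(n+1) = P_eps(1, u_n) P_eps(n) at eps = 0+ gives the recursion
     q_0 = 0,   q_{n+1} = d(u_n) + P^0(1, u_n) q_n.
   Each d(u_n) "drains from" J(u_{n+1}): its entries sum to 0 (X^eps
   conserves mass) and all other entries are >= 0 (they vanish at eps = 0).
   Deterministic transitions preserve this, so q_N drains from J(w):
   (i) if d(u_{N-1}) != 0 its J(w)-entry is < 0 and nothing compensates it;
   (ii) on Omega_bullet, d(u_n) lives on states merged by P^0(1, u_{n+1}),
   which kills it, so q_N = d(u_{N-1}) = 0.
   We develop right derivatives at 0, draining vectors, the Leibniz rule for
   the cocycle, the abstract recursion, the a.e. bookkeeping for the inverse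
   shift and the recursion along one orbit segment; the theorem follows. *)

From HB Require Import structures.
From mathcomp Require Import all_boot all_order all_algebra.
From mathcomp Require Import all_classical all_reals all_analysis.
From mathcomp Require Import zify lra.
Import Order.TTheory GRing.Theory Num.Theory.
Import numFieldNormedType.Exports.
Set Implicit Arguments. Unset Strict Implicit. Unset Printing Implicit Defensive.
Local Open Scope classical_set_scope.
Local Open Scope ring_scope.

Section RightDerivative.
Variable R : realType.

Definition diffq (f : R -> R) (e : R) : R := (f e - f 0) / e.

Definition has_rderiv (f : R -> R) (L : R) := diffq f e @[e --> 0^'+] --> L.

Definition rderiv (f : R -> R) : R := lim (diffq f e @[e --> 0^'+]).

Lemma rderivE f L : has_rderiv f L -> rderiv f = L.
Proof. exact: cvg_lim. Qed.

Lemma rderivP f : (exists L, has_rderiv f L) -> has_rderiv f (rderiv f).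
Proof. by move=> [L fL]; rewrite (rderivE fL). Qed.

Lemma has_rderiv_rcst f : (forall e, 0 < e -> f e = f 0) -> has_rderiv f 0.
Proof.
move=> fcst; have diffq0 : \forall e \near 0^'+, 0 = diffq f e.
  apply: filterS (nbhs_right_gt 0) => e e_gt0.
  by rewrite /diffq fcst ?subrr ?mul0r.
exact: cvg_trans (near_eq_cvg diffq0) (cvg_cst 0).
Qed.

Lemma has_rderiv_cvg f L : has_rderiv f L -> f e @[e --> 0^'+] --> f 0.
Proof.
move=> fL; have fE : \forall e \near 0^'+, f 0 + e * diffq f e = f e.
  by near=> e; rewrite /diffq mulrCA divff ?mulr1 ?subrKC.
apply: cvg_trans (near_eq_cvg fE) _.
have lim0 : (f 0 + e * diffq f e) @[e --> 0^'+] --> f 0 + 0 * L.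
  apply: cvgD; first exact: cvg_cst.
  by apply: cvgM => //; apply: cvg_at_right_filter; exact: cvg_id.
by rewrite mul0r addr0 in lim0.
Unshelve. all: by end_near. Qed.

Lemma has_rderiv_mul f g a b : has_rderiv f a -> has_rderiv g b ->
  has_rderiv (fun e => f e * g e) (a * g 0 + f 0 * b).
Proof.
move=> fa gb; have prodE : \forall e \near 0^'+,
    diffq f e * g e + f 0 * diffq g e = diffq (fun e => f e * g e) e.
  near=> e; rewrite /diffq mulrAC mulrA -mulrDl; congr (_ / _).
  by rewrite mulrBl mulrBr addrA subrK.
apply: cvg_trans (near_eq_cvg prodE) _.
by apply: cvgD; apply: cvgM => //; [exact: has_rderiv_cvg gb | exact: cvg_cst].
Unshelve. all: by end_near. Qed.

Lemma has_rderiv_sum n (f : 'I_n -> R -> R) (L : 'I_n -> R) :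
  (forall i, has_rderiv (f i) (L i)) ->
  has_rderiv (fun e => \sum_i f i e) (\sum_i L i).
Proof.
move=> fL; rewrite /has_rderiv /diffq.
under eq_fun do rewrite -sumrB mulr_suml.
apply: cvg_big => // [[x y] /=|i _]; last exact: fL.
by apply: continuousD; [exact: cvg_fst | exact: cvg_snd].
Qed.

Lemma has_rderiv_ge0 f L :
  has_rderiv f L -> (forall e, 0 < e -> f 0 <= f e) -> 0 <= L.
Proof.
move=> fL fmin; rewrite -(rderivE fL); apply: limr_ge; first exact: cvgP fL.
by near=> e; rewrite /diffq divr_ge0 ?subr_ge0 ?fmin // ltW.
Unshelve. all: by end_near. Qed.

Lemma Cm_has_rderiv m (eps0 : R) f : (1 <= m)%N -> 0 < eps0 ->
  Cm_on m 0 eps0 f -> exists L, has_rderiv f L.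
Proof.
move=> m_ge1 eps0_gt0 [F [F0E [_ Fderiv]]]; exists (F 1%N 0).
have := Fderiv 0%N m_ge1 0; rewrite lexx ltW // => /(_ isT) F0'.
have right_within : 0^'+ `=>`
    within [set y | 0 <= y <= eps0 /\ y != 0] (nbhs (0 : R)).
  move=> A A0.
  have {}A0 : \forall y \near 0^'+, (0 <= y <= eps0 /\ y != 0) -> A y.
    by move: A0; rewrite /at_right /within /=; apply: filterS => y Ay _.
  apply: filterS3 A0 (nbhs_right_gt 0) (nbhs_right_le eps0_gt0) => y Ay y0 ye.
  by apply: Ay; rewrite ye ltW // gt_eqF.
have FE : \forall e \near 0^'+, (F 0%N e - F 0%N 0) / (e - 0) = diffq f e.
  near=> e; rewrite /diffq subr0 !F0E ?lexx ?ltW //.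
exact: cvg_trans (near_eq_cvg FE) (cvg_trans (cvg_app _ right_within) F0').
Unshelve. all: by end_near. Qed.

End RightDerivative.

Section DrainingVectors.
Variables (R : realType) (k : nat).

(* v is a first-order perturbation of a point mass at e_j: it carries no
   total mass, and every coordinate except the j-th is nonnegative. *)
Definition drains_from (j : 'I_k) (v : 'cV[R]_k) :=
  \sum_i v i ord0 = 0 /\ (forall i, i != j -> 0 <= v i ord0).

Lemma mul_evec (A : 'M[R]_k) j i : (A *m evec j) i ord0 = A i j.
Proof. by rewrite /evec -colE mxE. Qed.

Lemma evecE (j i : 'I_k) : (evec j : 'cV[R]_k) i ord0 = (i == j)%:R.
Proof. by rewrite /evec mxE eqxx andbT. Qed.

Lemma drains_from0 j : drains_from j 0.
Proof. by split=> [|i _]; [rewrite big1 // => i _|]; rewrite mxE. Qed.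

Lemma drains_fromD j a b :
  drains_from j a -> drains_from j b -> drains_from j (a + b).
Proof.
move=> [suma a_ge0] [sumb b_ge0]; split => [|i ij].
  by under eq_bigr do rewrite mxE; rewrite big_split /= suma sumb addr0.
by rewrite mxE addr_ge0 ?a_ge0 ?b_ge0.
Qed.

Lemma drains_from_le0 j v : drains_from j v -> v j ord0 <= 0.
Proof.
move=> [sumv v_ge0]; move/eqP: sumv; rewrite (bigD1 j) //= addr_eq0 => /eqP ->.
by rewrite oppr_le0 sumr_ge0.
Qed.

Lemma drains_from_lt0 j v : drains_from j v -> v != 0 -> v j ord0 < 0.
Proof.
move=> [sumv v_ge0] v_neq0; rewrite lt_neqAle drains_from_le0 // andbT.
apply: contra v_neq0 => /eqP vj0; apply/eqP/matrixP => i o; rewrite (ord1 o) mxE.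
have [->|ij] := eqVneq i j; first by [].
move: sumv; rewrite (bigD1 j) //= vj0 add0r => /eqP.
rewrite psumr_eq0 => [/allP|l lj].
  by move=> /(_ i (mem_index_enum i)); rewrite ij => /implyP/(_ isT)/eqP.
exact: v_ge0.
Qed.

Lemma drains_from_mul (M : 'M[R]_k) j j' v : col_stochastic M ->
  M *m evec j = evec j' -> drains_from j v -> drains_from j' (M *m v).
Proof.
move=> [M_ge0 Msum] Mj [sumv v_ge0]; split => [|i ij'].
  under eq_bigr do rewrite mxE.
  rewrite exchange_big /=; under eq_bigr do rewrite -mulr_suml Msum mul1r.
  exact: sumv.
rewrite mxE (bigD1 j) //= -mul_evec Mj evecE (negbTE ij') mul0r add0r.
by rewrite sumr_ge0 // => l lj; rewrite mulr_ge0 ?M_ge0 ?v_ge0.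
Qed.

Lemma drains_annihilated (M : 'M[R]_k) c (v : 'cV[R]_k) :
  (forall l, ~ (M *m evec l = evec c) -> v l ord0 = 0) ->
  \sum_i v i ord0 = 0 -> M *m v = 0.
Proof.
move=> v_supp sumv; apply/matrixP => i o; rewrite (ord1 o) !mxE.
have -> : \sum_l M i l * v l ord0 = \sum_l (evec c : 'cV[R]_k) i ord0 * v l ord0.
  apply: eq_bigr => l _; have [Ml|Ml] := pselect (M *m evec l = evec c).
    by rewrite -mul_evec Ml.
  by rewrite v_supp // !mulr0.
by rewrite -mulr_sumr sumv mulr0.
Qed.

Lemma evec_other (c : 'I_k) :
  (1 < k)%N -> exists j : 'I_k, evec j != evec c :> 'cV[R]_k.
Proof.
move=> k_gt1; have [j jc] : exists j : 'I_k, j != c.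
  have [c0|c0] := eqVneq (nat_of_ord c) 0%N.
    by exists (Ordinal k_gt1); apply/eqP => /(congr1 val) /=; rewrite c0.
  exists (Ordinal (ltnW k_gt1)); apply/eqP => /(congr1 val) /= c0'.
  by rewrite -c0' in c0.
exists j; apply/eqP => /matrixP /(_ j ord0); rewrite !evecE eqxx (negbTE jc).
by move/eqP; rewrite oner_eq0.
Qed.

End DrainingVectors.

Section CocycleDerivative.
Variables (R : realType) (d : measure_display) (Omega : measurableType d).
Variables (theta : Omega -> Omega) (k : nat) (Peps : R -> Omega -> 'M[R]_k).

Definition step_rdiff (u : Omega) :=
  forall i j, exists L, has_rderiv (fun e => Peps e u i j) L.

Lemma P1derivE n w i j :
  P1deriv theta Peps n w i j = rderiv (fun e => cocycle theta (Peps e) n w i j).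
Proof. by rewrite /P1deriv mxE. Qed.

Lemma cocycleS_entry (P : Omega -> 'M[R]_k) n w i j :
  cocycle theta P n.+1 w i j =
  \sum_l P (iter n theta w) i l * cocycle theta P n w l j.
Proof. by rewrite /= mxE. Qed.

Lemma P1deriv_step u i j :
  P1deriv theta Peps 1 u i j = rderiv (fun e => Peps e u i j).
Proof.
by rewrite P1derivE; congr rderiv; apply: funext => e /=; rewrite mulmx1.
Qed.

Lemma P1deriv0 w : P1deriv theta Peps 0 w = 0.
Proof.
apply/matrixP => i j; rewrite P1derivE [RHS]mxE; apply: rderivE.
exact: (has_rderiv_rcst (f := fun=> (1%:M : 'M[R]_k) i j)).
Qed.

Lemma has_rderiv_cocycleS n w : step_rdiff (iter n theta w) ->
  (forall i j, has_rderiv (fun e => cocycle theta (Peps e) n w i j)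
                          (P1deriv theta Peps n w i j)) ->
  forall i j, has_rderiv (fun e => cocycle theta (Peps e) n.+1 w i j)
    ((P1deriv theta Peps 1 (iter n theta w) *m cocycle theta (Peps 0) n w
      + Peps 0 (iter n theta w) *m P1deriv theta Peps n w) i j).
Proof.
move=> step_diff cocycle_diff i j; rewrite !mxE -big_split /=.
rewrite (_ : (fun e => _) = fun e =>
  \sum_l Peps e (iter n theta w) i l * cocycle theta (Peps e) n w l j);
  last by apply: funext => e; rewrite cocycleS_entry.
apply: has_rderiv_sum => l; apply: has_rderiv_mul (cocycle_diff l j).
by rewrite P1deriv_step; apply: rderivP.
Qed.

Lemma has_rderiv_cocycle n w :
  (forall n', (n' < n)%N -> step_rdiff (iter n' theta w)) ->
  forall i j, has_rderiv (fun e => cocycle theta (Peps e) n w i j)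
                         (P1deriv theta Peps n w i j).
Proof.
elim: n => [|n IH] steps_diff i j; rewrite P1derivE; apply: rderivP.
  by exists 0; exact: (has_rderiv_rcst (f := fun=> (1%:M : 'M[R]_k) i j)).
eexists; apply: has_rderiv_cocycleS i j; first exact: steps_diff.
by apply: IH => n' lt_n'n; apply: steps_diff; exact: ltnW.
Qed.

Lemma P1deriv_rec n w :
  (forall n', (n' <= n)%N -> step_rdiff (iter n' theta w)) ->
  P1deriv theta Peps n.+1 w =
    P1deriv theta Peps 1 (iter n theta w) *m cocycle theta (Peps 0) n w
    + Peps 0 (iter n theta w) *m P1deriv theta Peps n w.
Proof.
move=> steps_diff; apply/matrixP => i j; rewrite P1derivE; apply: rderivE.
apply: has_rderiv_cocycleS; first exact: steps_diff.
by apply: has_rderiv_cocycle => n' /ltnW; exact: steps_diff.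
Qed.

Variable J : Omega -> 'I_k.

Lemma dissipE u i :
  dissip theta Peps J u i ord0 = rderiv (fun e => Peps e u i (J u)).
Proof. by rewrite /dissip mul_evec P1deriv_step. Qed.

(* Column J u of P_eps(1, u) has total mass 1 for every eps >= 0, and its
   entries off J (theta u) vanish at eps = 0 and are >= 0 for eps > 0;
   hence d(u) drains from J (theta u). *)
Lemma dissip_drains u : Markov_perturbation Peps -> step_rdiff u ->
  Peps 0 u *m evec (J u) = evec (J (theta u)) ->
  drains_from (J (theta u)) (dissip theta Peps J u).
Proof.
move=> [MRN_eps _] u_diff transition.
have entry_diff i :
    has_rderiv (fun e => Peps e u i (J u)) (dissip theta Peps J u i ord0).
  by rewrite dissipE; apply: rderivP.
split=> [|i iJ].
  rewrite -(rderivE (has_rderiv_sum entry_diff)); apply: rderivE.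
  apply: has_rderiv_rcst => e e_gt0.
  by rewrite ((MRN_eps e (ltW e_gt0)).2 u).2 ((MRN_eps 0 (lexx 0)).2 u).2.
apply: has_rderiv_ge0 (entry_diff i) _ => e e_gt0.
rewrite -mul_evec transition evecE (negbTE iJ).
exact: ((MRN_eps e (ltW e_gt0)).2 u).1.
Qed.

End CocycleDerivative.

Section DissipationRecursion.
Variables (R : realType) (k N : nat).
Variables (M : nat -> 'M[R]_k) (D q : nat -> 'cV[R]_k) (c : nat -> 'I_k).

(* An abstract version of q^(1) along an orbit: M n are the deterministic
   transitions, moving the point mass from c n to c n.+1, and q accumulates
   the dissipations D n transported by the M's. *)
Hypothesis M_stoch : forall n, col_stochastic (M n).
Hypothesis M_transport :
  forall n, (n < N)%N -> M n *m evec (c n) = evec (c n.+1).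
Hypothesis D_drains : forall n, (n < N)%N -> drains_from (c n.+1) (D n).
Hypothesis q0 : q 0 = 0.
Hypothesis qS : forall n, (n < N)%N -> q n.+1 = D n + M n *m q n.

Lemma q_drains n : (n <= N)%N -> drains_from (c n) (q n).
Proof.
elim: n => [_|n IH lt_nN]; first by rewrite q0; exact: drains_from0.
rewrite qS //; apply: drains_fromD; first exact: D_drains.
exact: drains_from_mul (M_transport lt_nN) (IH (ltnW lt_nN)).
Qed.

Hypothesis N_gt0 : (0 < N)%N.

Lemma q_last : q N = D N.-1 + M N.-1 *m q N.-1.
Proof. by rewrite -qS ?prednK // ltn_predL. Qed.

(* A nonzero last dissipation cannot be compensated: the c N-th coordinate
   of q N is strictly negative. *)
Lemma q_last_neq0 : D N.-1 != 0 -> q N != 0.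
Proof.
move=> D_neq0; have lt_N1N : (N.-1 < N)%N by rewrite ltn_predL.
have D_lt0 := drains_from_lt0 (D_drains lt_N1N) D_neq0.
have Mq_le0 := drains_from_le0
  (drains_from_mul (M_stoch _) (M_transport lt_N1N) (q_drains (ltnW lt_N1N))).
rewrite prednK // in D_lt0 Mq_le0.
apply/eqP => /(congr1 (fun v : 'cV[R]_k => v (c N) ord0)).
rewrite q_last /= [LHS]mxE [RHS]mxE; lra.
Qed.

(* If every D n vanishes outside the states that M n.+1 sends to c n.+2,
   then each M n annihilates q n, so that q N = D N.-1. *)
Hypothesis D_supp : forall n, (n.+1 < N)%N -> forall j,
  ~ (M n.+1 *m evec j = evec (c n.+2)) -> D n j ord0 = 0.

Lemma M_annihilates_q n : (n < N)%N -> M n *m q n = 0.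
Proof.
elim: n => [_|n IH lt_n1N]; first by rewrite q0 mulmx0.
rewrite qS ?mulmxDr ?IH ?mulmx0 ?addr0 ?(ltnW lt_n1N) //.
exact: drains_annihilated (D_supp lt_n1N) (D_drains (ltnW lt_n1N)).1.
Qed.

Lemma q_last_eq0 : D N.-1 = 0 -> q N = 0.
Proof. by move=> D0; rewrite q_last D0 add0r M_annihilates_q // ltn_predL. Qed.

End DissipationRecursion.

Section InvertibleShift.
Variables (R : realType) (d : measure_display) (Omega : measurableType d).
Variables (mu : probability Omega R) (theta thinv : Omega -> Omega).

Lemma iter_theta_thinv : cancel thinv theta ->
  forall n a w, iter n theta (iter (n + a) thinv w) = iter a thinv w.
Proof.
by move=> thinvK; elim=> [//|n IH] a w; rewrite iterSr addSn iterS thinvK IH.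
Qed.

Lemma image_iter_thinv : cancel theta thinv ->
  forall a (A : set Omega) w, (iter a theta @` A) w -> A (iter a thinv w).
Proof.
move=> thK a A _ [v Av <-]; suff -> : iter a thinv (iter a theta v) = v by [].
by elim: a v {Av} => [//|a IH] v; rewrite iterSr [iter a.+1 theta v]iterS thK IH.
Qed.

Hypothesis inv : invertible_mds theta thinv.
Hypothesis mp : measure_preserving mu theta.

(* thinv maps null sets to null sets:
   mu (thinv^-1 A) = mu (theta^-1 (thinv^-1 A)) = mu A. *)
Lemma ae_thinv (P : Omega -> Prop) :
  {ae mu, forall w, P w} -> {ae mu, forall w, P (thinv w)}.
Proof.
case: inv => thK _ _ thinv_meas [A [mA A0 notP_A]].
have mA' : measurable (thinv @^-1` A).
  by have := thinv_meas measurableT _ mA; rewrite setTI.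
exists (thinv @^-1` A); split => // [|w /= /notP_A //].
rewrite -(mp mA') (_ : theta @^-1` _ = A) //.
by apply/seteqP; split => w /=; rewrite thK.
Qed.

Lemma ae_iter_thinv (P : Omega -> Prop) :
  {ae mu, forall w, P w} -> {ae mu, forall w, forall j, P (iter j thinv w)}.
Proof.
move=> Pae; apply: ae_foralln => j; elim: j => [//|j IH].
by apply: filterS (ae_thinv IH) => w; rewrite iterSr.
Qed.

End InvertibleShift.

Section ForwardPath.
Variables (R : realType) (d : measure_display) (Omega : measurableType d).
Variables (theta : Omega -> Omega) (k : nat) (Peps : R -> Omega -> 'M[R]_k).
Variables (J : Omega -> 'I_k) (u0 : Omega) (N : nat).

(* The orbit segment u0, theta u0, ..., theta^N u0 along which q^(1) is
   computed: every step is right differentiable and X^0 carries the point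
   mass at J u0 along J. *)
Hypothesis perturb : Markov_perturbation Peps.
Hypothesis P0_stoch : forall v, col_stochastic (Peps 0 v).
Hypothesis steps_diff :
  forall n, (n < N)%N -> step_rdiff Peps (iter n theta u0).
Hypothesis transport : forall n,
  cocycle theta (Peps 0) n u0 *m evec (J u0) = evec (J (iter n theta u0)).
Hypothesis N_gt0 : (0 < N)%N.

Lemma transport_step n :
  Peps 0 (iter n theta u0) *m evec (J (iter n theta u0))
  = evec (J (iter n.+1 theta u0)).
Proof. by have := transport n.+1; rewrite /= -mulmxA transport. Qed.

Lemma path_qS n : (n < N)%N ->
  P1deriv theta Peps n.+1 u0 *m evec (J u0) =
  dissip theta Peps J (iter n theta u0)
  + Peps 0 (iter n theta u0) *m (P1deriv theta Peps n u0 *m evec (J u0)).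
Proof.
move=> lt_nN; rewrite P1deriv_rec => [|n' le_n'n]; last first.
  by apply: steps_diff; exact: leq_ltn_trans le_n'n lt_nN.
by rewrite mulmxDl -!mulmxA transport.
Qed.

(* Lemma 4.4 along the orbit segment, with M n := P^0(1, theta^n u0),
   D n := d(theta^n u0) and c n := J (theta^n u0). *)
Lemma path_q_dichotomy :
  (dissip theta Peps J (iter N.-1 theta u0) != 0 ->
     P1deriv theta Peps N u0 *m evec (J u0) != 0) /\
  (dissip theta Peps J (iter N.-1 theta u0) = 0 ->
     (forall n, (n.+1 < N)%N -> Omega_bullet theta Peps J (iter n theta u0)) ->
     P1deriv theta Peps N u0 *m evec (J u0) = 0).
Proof.
have D_drains n : (n < N)%N ->
    drains_from (J (iter n.+1 theta u0)) (dissip theta Peps J (iter n theta u0)).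
  by move=> lt_nN; apply: dissip_drains perturb (steps_diff lt_nN) _;
     exact: transport_step.
have q0 : P1deriv theta Peps 0 u0 *m evec (J u0) = 0 by rewrite P1deriv0 mul0mx.
split=> [|D0 bullet].
  exact: q_last_neq0 (fun n => P0_stoch _) (fun n _ => transport_step n)
                     D_drains q0 path_qS N_gt0.
apply: (q_last_eq0 (c := fun n => J (iter n theta u0))
                   D_drains q0 path_qS N_gt0 _ D0).
by move=> n lt_n1N j; exact: bullet.
Qed.

End ForwardPath.

Unset Implicit Arguments.

Theorem lemma4p4 (R : realType) (d : measure_display) (Omega : measurableType d)
  (mu : probability Omega R) (theta thinv : Omega -> Omega)
  (k : nat) (m : nat) (Peps : R -> Omega -> 'M[R]_k)
  (J : Omega -> 'I_k) (Nm : Omega -> nat) :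
  (2 <= k)%N ->
  invertible_mds theta thinv ->
  measure_preserving mu theta ->
  ergodic mu theta ->
  (* X^0 := X^eps at eps = 0 is a synchronized DRN *)
  DRN (Peps 0) ->
  synchronized mu theta (Peps 0) ->
  (* J is a synchronization index, Nm = N^- a pull-back synchronization time *)
  (forall j, measurable [set w | J w = j]) ->
  (forall n, measurable [set w | Nm w = n]) ->
  {ae mu, forall w, forall n,
     cocycle theta (Peps 0) n w *m evec (J w) = evec (J (iter n theta w))} ->
  {ae mu, forall w, forall (j : 'I_k) n, (Nm w <= n)%N ->
     cocycle theta (Peps 0) n (iter n thinv w) *m evec j = evec (J w)} ->
  (* C^m Markov perturbation, m >= 1 *)
  (1 <= m)%N ->
  Cm_perturbation mu m Peps ->
  {ae mu, forall w,
     (dissip theta Peps J (thinv w) != 0 ->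
        q1 theta thinv Peps J Nm w != 0) /\
     (dissip theta Peps J (thinv w) = 0 ->
        (forall l, (1 <= l <= Nm w - 1)%N ->
           (iter l.+1 theta @` Omega_bullet theta Peps J) w) ->
        q1 theta thinv Peps J Nm w = 0)}.
Proof.
move=> k_gt1 inv mp _ [[_ P0_stoch] _] _ _ _ forward pullback m_ge1
  [perturb [eps0 [eps0_gt0 smooth]]].
have regular : {ae mu, forall w, step_rdiff Peps w /\ forall n,
    cocycle theta (Peps 0) n w *m evec (J w) = evec (J (iter n theta w))}.
  apply: filterS2 forward smooth => w transport w_smooth; split=> // i j.
  exact: Cm_has_rderiv m_ge1 eps0_gt0 (w_smooth i j).
apply: filterS2 (ae_iter_thinv inv mp regular) pullback => w reg pb.
have [thK thinvK _ _] := inv.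
have N_gt0 : (0 < Nm w)%N.
  rewrite lt0n; apply/eqP => N0; have [j] := evec_other R (J w) k_gt1.
  by rewrite -(pb j 0%N) ?N0 //= mul1mx eqxx.
have path_back n : (n <= Nm w)%N ->
    iter n theta (iter (Nm w) thinv w) = iter (Nm w - n) thinv w.
  by move=> le_nN; rewrite -[RHS](iter_theta_thinv thinvK n) subnKC.
have steps_diff n : (n < Nm w)%N ->
    step_rdiff Peps (iter n theta (iter (Nm w) thinv w)).
  by move=> /ltnW /path_back ->; exact: (reg _).1.
have [q_neq0 q_eq0] :=
  path_q_dichotomy perturb P0_stoch steps_diff (reg (Nm w)).2 N_gt0.
have last_step : iter (Nm w).-1 theta (iter (Nm w) thinv w) = thinv w.
  rewrite path_back ?leq_pred //.
  by have -> : (Nm w - (Nm w).-1 = 1)%N by lia.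
rewrite last_step in q_neq0 q_eq0; split=> // d0 bullet.
apply: q_eq0 => // n lt_n1N.
have l_range : (1 <= Nm w - 1 - n <= Nm w - 1)%N by lia.
rewrite path_back ?(ltnW (ltnW lt_n1N)) //.
have -> : (Nm w - n = (Nm w - 1 - n).+1)%N by lia.
exact: image_iter_thinv thK _ _ _ (bullet _ l_range).
Qed.
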